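(* Let $q$ be a prime power and let $n,k$ be integers with $3\le k\le n-2\le q-2$. Let $\alpha_1,\dots,\alpha_n\in\mathbb{F}_q$ be pairwise distinct. Let $C_{k-1,k-2}$ be the linear code over $\mathbb{F}_q$ generated by the $k\times n$ matrix $G_{k-1,k-2}$ whose rows are $(\alpha_1^{e},\alpha_2^{e},\dots,\alpha_n^{e})$ for $e=0,1,\dots,k-3,k,k+1$ (in this order). Then $C_{k-1,k-2}$ is an $[n,k,d]$ linear code with $d\in\{n-k-1,\,n-k,\,n-k+1\}$.
   Context: Convention: $0^0=1$. An $[n,k,d]$ code is a linear code of length $n$, dimension $k$ and minimum Hamming distance $d$. *)

From HB Require Import structures.
From mathcomp Require Import all_boot all_order all_algebra all_field.
Set Implicit Arguments. Unset Strict Implicit. Unset Printing Implicit Defensive.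
Import GRing.Theory.
Local Open Scope ring_scope.

Definition hweight (F : fieldType) (n : nat) (c : 'rV[F]_n) : nat :=
  #|[set i : 'I_n | c 0 i != 0]|.

(* The linear code generated by G is the row space of G; d is its minimum
   Hamming distance (= minimum weight of a nonzero codeword, for linear codes). *)
Definition is_min_dist (F : fieldType) (k n : nat) (G : 'M[F]_(k, n)) (d : nat) : Prop :=
  (exists2 c : 'rV[F]_n, (c <= G)%MS /\ c != 0 & hweight c = d) /\
  (forall c : 'rV[F]_n, (c <= G)%MS -> c != 0 -> (d <= hweight c)%N).

Definition gexp (k : nat) (i : nat) : nat := if (i < k - 2)%N then i else (i + 2)%N.

Definition Gmat (F : fieldType) (k n : nat) (alpha : 'I_n -> F) : 'M[F]_(k, n) :=
  \matrix_(i < k, j < n) alpha j ^+ gexp k i.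

(** The codeword [u *m Gmat k alpha] of a message [u != 0] lists the values
    at the [alpha j] of a nonzero polynomial of degree at most [k + 1], which
    has at most [k + 1] roots, so every nonzero codeword has weight at least
    [n - k - 1]; in particular the generator matrix has full rank [k].
    Conversely, [k - 1] linear conditions on the [k] message coordinates
    always have a nonzero solution, so some nonzero codeword vanishes on
    [k - 1] prescribed positions and has weight at most [n - k + 1] (the
    Singleton bound). *)

From HB Require Import structures.
From mathcomp Require Import all_boot all_order all_algebra all_field.
From mathcomp Require Import zify.
Set Implicit Arguments. Unset Strict Implicit. Unset Printing Implicit Defensive.
Local Open Scope ring_scope.
Import GRing.Theory.

Section HammingWeight.
Variables (F : fieldType) (n : nat).
Implicit Type c : 'rV[F]_n.

Lemma hweightE c : hweight c = subn n #|[set i : 'I_n | c 0 i == 0]|.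
Proof.
rewrite /hweight; have -> : [set i | c 0 i != 0] = ~: [set i | c 0 i == 0].
  by apply/setP => i; rewrite !inE.
by rewrite cardsCs setCK card_ord.
Qed.

Lemma hweight0 : hweight (0 : 'rV[F]_n) = 0%N.
Proof.
by apply/eqP; rewrite cards_eq0; apply/eqP/setP => i; rewrite !inE mxE eqxx.
Qed.

Lemma hweight_vanishing c (S : {set 'I_n}) :
  {in S, forall i, c 0 i = 0} -> (hweight c <= n - #|S|)%N.
Proof.
move=> cS; rewrite hweightE leq_sub2l // subset_leq_card //.
by apply/subsetP => i /cS; rewrite inE => ->.
Qed.

End HammingWeight.

Section SingletonBound.
Variables (F : fieldType) (k n : nat) (G : 'M[F]_(k, n)).

Lemma exists_codeword_vanishing m (f : 'I_m -> 'I_n) : (m < k)%N ->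
  exists2 u : 'rV[F]_k, u != 0 & forall j, (u *m G) 0 (f j) = 0.
Proof.
move=> ltmk.
have : kermx (colsub f G) != 0.
  rewrite kermx_eq0 /row_free; apply: contraTN ltmk => /eqP <-.
  by rewrite -leqNgt rank_leq_col.
case/rowV0Pn => u /sub_kermxP uf0 u0; exists u => // j.
by move/rowP/(_ j): uf0; rewrite mulmx_colsub !mxE.
Qed.

Lemma singleton_bound : row_free G -> (0 < k)%N ->
  exists2 c : 'rV[F]_n, (c <= G)%MS /\ c != 0 & (hweight c <= n - k.-1)%N.
Proof.
move=> freeG k_gt0.
have lekn : (k.-1 <= n)%N.
  by apply: leq_trans (leq_pred _) _; rewrite -(eqP freeG) rank_leq_col.
have [u u0 uG0] :=
  exists_codeword_vanishing (widen_ord lekn) (etrans (ltn_predL k) k_gt0).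
exists (u *m G); first by split; rewrite ?submxMl ?mulmx_free_eq0.
have widen_inj : injective (widen_ord lekn).
  by move=> i j /(congr1 val) /= /ord_inj.
rewrite -[k.-1]card_ord -(card_imset _ widen_inj).
by apply: hweight_vanishing => _ /imsetP[j _ ->].
Qed.

End SingletonBound.

Lemma is_min_dist_exists (F : finFieldType) k n (G : 'M[F]_(k, n)) :
  (exists c : 'rV[F]_n, (c <= G)%MS /\ c != 0) -> exists d, is_min_dist G d.
Proof.
case=> c [cG c0].
pose P d := [exists c : 'rV[F]_n, [&& (c <= G)%MS, c != 0 & hweight c == d]].
have exP : exists d, P d.
  by exists (hweight c); apply/existsP; exists c; rewrite cG c0 /=.
case: (ex_minnP exP) => d /existsP[c' /and3P[c'G c'0 /eqP c'd]] dmin.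
exists d; split; first by exists c'.
move=> c'' c''G c''0; apply: dmin.
by apply/existsP; exists c''; rewrite c''G c''0 /=.
Qed.

Lemma hweight_eval_poly (F : fieldType) n (alpha : 'I_n -> F) (p : {poly F}) :
  injective alpha -> p != 0 ->
  (n - (size p).-1 <= hweight (\row_j p.[alpha j]))%N.
Proof.
move=> alpha_inj p0; rewrite hweightE leq_sub2l // -ltnS.
apply: leq_trans (leqSpred _).
rewrite cardE -(size_map alpha); apply: max_poly_roots p0 _ _.
  by apply/allP => x /mapP[j]; rewrite mem_enum inE mxE => pj ->.
by rewrite map_inj_uniq ?enum_uniq.
Qed.

Section GmatCode.
Variables (F : fieldType) (k n : nat) (alpha : 'I_n -> F).

Definition Gpoly (u : 'rV[F]_k) : {poly F} :=
  \sum_(i < k) u 0 i *: 'X^(gexp k i).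

Lemma gexp_inj : injective (gexp k).
Proof. by move=> i j; rewrite /gexp; case: ifP; case: ifP; lia. Qed.

Lemma gexp_lt (i : 'I_k) : (gexp k i < k.+2)%N.
Proof. by rewrite /gexp; case: ifP; have := ltn_ord i; lia. Qed.

Lemma coef_Gpoly (u : 'rV[F]_k) (i : 'I_k) : (Gpoly u)`_(gexp k i) = u 0 i.
Proof.
rewrite coef_sum (bigD1 i) //= coefZ coefXn eqxx mulr1 big1 ?addr0 // => j ji.
rewrite coefZ coefXn (inj_eq gexp_inj) eq_sym.
by rewrite (negbTE (ji : j != i :> nat)) mulr0.
Qed.

Lemma Gpoly_eq0 (u : 'rV[F]_k) : (Gpoly u == 0) = (u == 0).
Proof.
apply/eqP/eqP => [u0|->].
  by apply/rowP => i; rewrite -coef_Gpoly u0 coef0 mxE.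
by rewrite /Gpoly big1 // => i _; rewrite mxE scale0r.
Qed.

Lemma size_Gpoly (u : 'rV[F]_k) : (size (Gpoly u) <= k.+2)%N.
Proof.
apply: leq_trans (size_sum _ _ _) _; apply/bigmax_leqP => i _.
by apply: leq_trans (size_scale_leq _ _) _; rewrite size_polyXn gexp_lt.
Qed.

Lemma mul_Gmat (u : 'rV[F]_k) : u *m Gmat k alpha = \row_j (Gpoly u).[alpha j].
Proof.
apply/rowP => j; rewrite !mxE horner_sum; apply: eq_bigr => i _.
by rewrite mxE hornerZ hornerXn.
Qed.

Hypothesis alpha_inj : injective alpha.

Lemma hweight_mul_Gmat (u : 'rV[F]_k) :
  u != 0 -> (n - k.+1 <= hweight (u *m Gmat k alpha))%N.
Proof.
rewrite -Gpoly_eq0 mul_Gmat => /(hweight_eval_poly alpha_inj); apply: leq_trans.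
by rewrite leq_sub2l //; have := size_Gpoly u; lia.
Qed.

Lemma hweight_Gmat_codeword (c : 'rV[F]_n) :
  (c <= Gmat k alpha)%MS -> c != 0 -> (n - k.+1 <= hweight c)%N.
Proof.
case/submxP=> u -> uG0; apply: hweight_mul_Gmat.
by apply: contraNneq uG0 => ->; rewrite mul0mx.
Qed.

Lemma row_free_Gmat : (k.+1 < n)%N -> row_free (Gmat k alpha).
Proof.
move=> ltkn; apply: inj_row_free => u uG0; apply/eqP; apply: contraTT ltkn.
by move/hweight_mul_Gmat; rewrite uG0 hweight0 leqn0 subn_eq0 leqNgt.
Qed.

End GmatCode.

Theorem theorem3p1 (F : finFieldType) (n k : nat) (alpha : 'I_n -> F)
  (hk3 : (3 <= k)%N) (hkn : (k <= n - 2)%N) (hnq : (n - 2 <= #|F| - 2)%N)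
  (halpha : injective alpha) :
  \rank (Gmat k alpha) = k /\
  exists d : nat, is_min_dist (Gmat k alpha) d /\
    d \in [:: (n - k - 1)%N; (n - k)%N; (n - k + 1)%N].
Proof.
(* [hnq] only ensures that [n] distinct evaluation points exist in [F]. *)
have freeG : row_free (Gmat k alpha) by apply: (row_free_Gmat halpha); lia.
split; first exact/eqP.
have [c cG c_le] := singleton_bound freeG (leq_trans (isT : 0 < 3)%N hk3).
have [d dmin] := is_min_dist_exists (ex_intro _ c cG).
exists d; split=> //.
have [[c' [c'G c'0] <-] d_le] := dmin.
have lb := hweight_Gmat_codeword halpha c'G c'0.
have ub := d_le c cG.1 cG.2.
by rewrite !inE; lia.
Qed.
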